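(* Let $X$ be a finite set and $k^*<k<|X|$ integers with $2k-k^*\le|X|$. Let $\mathcal{P}\subseteq\binom{X}{k}$ be such that whenever $Z,Y\in\binom{X}{k}$ satisfy $|Z\cap Y|=k^*$, we have $Z\in\mathcal{P}\Leftrightarrow Y\in\mathcal{P}$. Then either $\mathcal{P}=\emptyset$ or $\mathcal{P}=\binom{X}{k}$, or else $|X|=2k$, $k^*=0$, and for every $Y\in\binom{X}{k}$ we have $Y\in\mathcal{P}\Leftrightarrow X\setminus Y\in\mathcal{P}$ (i.e. $\mathcal{P}$ is a union of pairs $\{Y,X\setminus Y\}$).
   Context: $\binom{X}{k}=\{Y\subseteq X:|Y|=k\}$. *)

From mathcomp Require Import all_boot.
Set Implicit Arguments. Unset Strict Implicit. Unset Printing Implicit Defensive.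

Definition binom (X : finType) (k : nat) : {set {set X}} :=
  [set Y : {set X} | #|Y| == k].

From mathcomp Require Import all_boot zify.

(* Exchanging one element of a k-set Y for one outside it gives a k-set Y'
   with the same membership in P: a k-set Z with #|Z :&: Y| = kstar that
   contains both or neither of the exchanged elements also meets Y' in kstar
   points, and such a Z exists unless #|X| = 2k and kstar = 0.  Any two k-sets
   are joined by a chain of exchanges, so P is empty or all of binom X k. *)

Section Exchange.
Local Set Implicit Arguments. Local Unset Strict Implicit.
Variable T : finType.
Implicit Types (A Y Z : {set T}) (x a b : T).

Lemma exists_subset_card A m : m <= #|A| -> exists2 B : {set T}, B \subset A & #|B| = m.
Proof.
rewrite -bin_gt0 -cards_draws => /card_gt0P[B].
by rewrite inE => /andP[sBA /eqP cardB]; exists B.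
Qed.

Lemma exists_subset_card_mem A x m (t : bool) :
  x \in A -> t <= m < #|A| + t ->
  exists B : {set T}, [/\ B \subset A, #|B| = m & (x \in B) = t].
Proof.
move=> xA /andP[le_t_m lt_m_A].
have [B /subsetP sBA cardB] : exists2 B : {set T}, B \subset A :\ x & #|B| = m - t.
  by apply: exists_subset_card; move: lt_m_A; rewrite (cardsD1 x A) xA; lia.
have xB : x \notin B by apply/negP => /sBA; rewrite setD11.
have sBA' : B \subset A by apply/subsetP => y /sBA /setD1P[].
case: t le_t_m {lt_m_A} cardB => le_t_m cardB.
  exists (x |: B); split; first by rewrite subUset sub1set xA.
    by rewrite cardsU1 xB cardB; lia.
  by rewrite setU11.
by exists B; rewrite cardB subn0 (negbTE xB).
Qed.

Lemma card_setI_setU1 Z A x : x \notin A -> #|Z :&: (x |: A)| = (x \in Z) + #|Z :&: A|.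
Proof.
move=> xA; rewrite (cardsD1 x) !inE eqxx andbT; congr (_ + _).
by apply: eq_card => y; rewrite !inE; case: eqP => // ->; rewrite (negbTE xA) !andbF.
Qed.

Lemma card_exchange Y a b : a \in Y -> b \notin Y -> #|b |: (Y :\ a)| = #|Y|.
Proof.
by move=> aY bY; rewrite cardsU1 inE (negbTE bY) andbF [#|Y|](cardsD1 a) aY.
Qed.

Lemma card_setI_exchange Z Y a b :
  a \in Y -> b \notin Y -> (a \in Z) = (b \in Z) ->
  #|Z :&: (b |: (Y :\ a))| = #|Z :&: Y|.
Proof.
move=> aY bY abZ; have bYa : b \notin Y :\ a by rewrite inE (negbTE bY) andbF.
by rewrite -[in RHS](setD1K aY) !card_setI_setU1 ?setD11 ?abZ.
Qed.

Lemma exists_set_meeting Y a b (t : bool) i j :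
  a \in Y -> b \notin Y -> t <= i < #|Y| + t -> t <= j < #|~: Y| + t ->
  exists Z, [/\ #|Z :&: Y| = i, #|Z :\: Y| = j & (a \in Z) = (b \in Z)].
Proof.
move=> aY bY rangei rangej.
have [S1 [sS1Y cardS1 aS1]] := exists_subset_card_mem aY rangei.
have bCY : b \in ~: Y by rewrite inE.
have [S2 [sS2Y cardS2 bS2]] := exists_subset_card_mem bCY rangej.
have dS2Y : [disjoint S2 & Y] by rewrite disjoints_subset.
exists (S1 :|: S2); split.
- by rewrite setIUl (setIidPl sS1Y) (disjoint_setI0 dS2Y) setU0.
- by rewrite setDUl (setDidPl dS2Y) (_ : S1 :\: Y = set0) ?set0U //; apply/eqP; rewrite setD_eq0.
- have aS2 : a \notin S2 by apply: contraL aY => /(subsetP sS2Y); rewrite inE.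
  have bS1 : b \notin S1 by apply: contra bY => /(subsetP sS1Y).
  by rewrite !inE aS1 bS2 (negbTE aS2) (negbTE bS1) orbF.
Qed.

Lemma exchange_invariant_constant k (P : pred {set T}) :
  (forall Y a b, #|Y| = k -> a \in Y -> b \notin Y -> P (b |: (Y :\ a)) = P Y) ->
  {in binom T k &, forall Y W, P Y = P W}.
Proof.
move=> exchP Y W; rewrite !inE => /eqP cardY /eqP cardW.
have [n] := ubnP #|Y :\: W|; elim: n Y cardY => // n IH Y cardY.
rewrite ltnS => leYWn.
have [YW0|[a aYW]] := set_0Vmem (Y :\: W).
  suff -> : Y = W by [].
  by apply/eqP; rewrite eqEcard -setD_eq0 YW0 eqxx cardY cardW /=.
have cardWY : #|W :\: Y| = #|Y :\: W| by rewrite !cardsD setIC cardY cardW.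
have [b bWY] : exists b, b \in W :\: Y.
  by apply/card_gt0P; rewrite cardWY (cardsD1 a) aYW.
move: aYW bWY; rewrite !inE => /andP[aW aY] /andP[bY bW].
rewrite -(exchP Y a b) //; apply: IH; first by rewrite card_exchange.
have -> : (b |: (Y :\ a)) :\: W = (Y :\: W) :\ a.
  apply/setP => x; rewrite !inE.
  by case: (eqVneq x b) => [->|_]; [rewrite bW andbF | case: (x != a); rewrite /= ?andbF].
by move: leYWn; rewrite [#|Y :\: W|](cardsD1 a) !inE aW aY.
Qed.

End Exchange.

Section MeetInvariantFamily.
Local Set Implicit Arguments. Local Unset Strict Implicit.
Variables (X : finType) (k kstar : nat) (P : {set {set X}}).
Hypotheses (lt_kstar_k : kstar < k) (le_2k_n : 2 * k - kstar <= #|X|).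
Hypothesis not_halving : ~ (#|X| = 2 * k /\ kstar = 0).
Hypothesis P_meet_invariant : forall Z Y : {set X},
  Z \in binom X k -> Y \in binom X k -> #|Z :&: Y| = kstar -> (Z \in P) = (Y \in P).

Lemma mem_exchange (Y : {set X}) a b :
  #|Y| = k -> a \in Y -> b \notin Y -> (b |: (Y :\ a) \in P) = (Y \in P).
Proof.
move=> cardY aY bY.
have cardCY : #|~: Y| = #|X| - k by rewrite cardsCs setCK cardY.
(* If #|X| = 2k - kstar, a k-set meeting Y in kstar points contains all of ~: Y,
   hence b, and must then contain a as well. *)
pose t := #|X| == 2 * k - kstar.
have [Z [cardZY cardZnY abZ]] : exists Z : {set X},
    [/\ #|Z :&: Y| = kstar, #|Z :\: Y| = k - kstar & (a \in Z) = (b \in Z)].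
  by apply: (exists_set_meeting (t := t) aY bY); rewrite ?cardY ?cardCY /t; case: eqP; lia.
have ZB : Z \in binom X k by rewrite inE -(cardsID Y) cardZY cardZnY subnKC // ltnW.
have YB : Y \in binom X k by rewrite inE cardY.
have Y'B : b |: (Y :\ a) \in binom X k by rewrite inE card_exchange ?cardY.
by rewrite -(P_meet_invariant ZB Y'B) ?card_setI_exchange // (P_meet_invariant ZB YB).
Qed.

End MeetInvariantFamily.

Theorem claim12p3 (X : finType) (k kstar : nat) (P : {set {set X}}) :
  kstar < k -> k < #|X| -> 2 * k - kstar <= #|X| ->
  P \subset binom X k ->
  (forall Z Y : {set X}, Z \in binom X k -> Y \in binom X k ->
     #|Z :&: Y| = kstar -> (Z \in P) = (Y \in P)) ->
  P = set0 \/ P = binom X k \/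
  [/\ #|X| = 2 * k, kstar = 0 &
      forall Y : {set X}, Y \in binom X k -> (Y \in P) = (~: Y \in P)].
Proof.
(* k < #|X| follows from the other two bounds. *)
move=> lt_kstar_k _ le_2k_n sPbinom P_meet_invariant.
case: (boolP ((#|X| == 2 * k) && (kstar == 0))) => [/andP[/eqP n2k /eqP kstar0]|not_half].
  right; right; split=> // Y YB; apply: P_meet_invariant; rewrite ?setICr ?cards0 //.
  by move: YB (cardsC Y); rewrite !inE n2k => /eqP->; lia.
have not_halving : ~ (#|X| = 2 * k /\ kstar = 0).
  by case=> n2k kstar0; rewrite n2k kstar0 !eqxx in not_half.
have P_const := exchange_invariant_constant (P := fun Y => Y \in P)
  (mem_exchange lt_kstar_k le_2k_n not_halving P_meet_invariant).
have [->|[Y PY]] := set_0Vmem P; [by left | right; left].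
apply/setP => W; apply/idP/idP => [/(subsetP sPbinom) //|WB].
by rewrite (P_const W Y) // (subsetP sPbinom).
Qed.
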